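(* Let $J$ be either a closed interval or a circle, and let $\gamma:J\to\mathbb{R}^n$ be a continuous map of bounded variation with total variation $l$. Then $\mathcal{H}^2(\gamma(J)\times\gamma(J))\leq(\pi/2)\,l^2$. In particular, $\gamma(J)\times\gamma(J)\subset\mathbb{R}^{2n}$ has finite $2$-dimensional Hausdorff measure.
   Context: $\mathcal{H}^2$ denotes $2$-dimensional Hausdorff measure, normalized so that $\mathcal{H}^2(E)=\lim_{\varepsilon\to 0}\inf\{(\pi/4)\sum_j \mathrm{diam}(A_j)^2 : E\subset\bigcup_j A_j,\ \mathrm{diam}(A_j)<\varepsilon\}$ (countable covers). *)

From HB Require Import structures.
From mathcomp Require Import all_boot all_order all_algebra.
From mathcomp Require Import all_classical all_reals all_analysis.
Set Implicit Arguments. Unset Strict Implicit. Unset Printing Implicit Defensive.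
Import Order.TTheory GRing.Theory Num.Theory.
Import numFieldNormedType.Exports.
Local Open Scope classical_set_scope.
Local Open Scope ring_scope.

Definition enorm {R : realType} {n : nat} (v : 'rV[R]_n) : R :=
  Num.sqrt (\sum_(i < n) v ord0 i ^+ 2).

(* Variation of a vector-valued map along a partition s of [a,b]
   (same convention as MathComp-Analysis' [variation] in numfun.v,
   with the Euclidean norm instead of the absolute value). *)
Definition vvariation {R : realType} {n : nat} (a b : R) (g : R -> 'rV[R]_n)
    (s : seq R) : R :=
  let F := g \o nth b (a :: s) in
  \sum_(0 <= k < size s) enorm (F k.+1 - F k).

Definition vvariations {R : realType} {n : nat} (a b : R) (g : R -> 'rV[R]_n)
  : set R := [set vvariation a b g s | s in itv_partition a b].

Definition vtotal_variation {R : realType} {n : nat} (a b : R)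
    (g : R -> 'rV[R]_n) : \bar R :=
  ereal_sup [set (x%:E)%E | x in vvariations a b g].

(* Euclidean diameter of a subset of R^m (diam of the empty set is 0). *)
Definition ediam {R : realType} {m : nat} (A : set 'rV[R]_m) : \bar R :=
  ereal_sup [set d : \bar R | d = 0%E \/
     exists x y, A x /\ A y /\ d = ((enorm (x - y))%:E)%E].

Definition hcontent2 {R : realType} {m : nat} (eps : R) (E : set 'rV[R]_m)
  : \bar R :=
  ereal_inf [set z : \bar R | exists A : nat -> set 'rV[R]_m,
     (forall j, (ediam (A j) < eps%:E)%E) /\ E `<=` \bigcup_j A j /\
     z = ((pi / 4)%:E * \sum_(0 <= j <oo) (ediam (A j) * ediam (A j)))%E].

(* 2-dimensional Hausdorff measure: the limit as eps -> 0+ of the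
   (nonincreasing in eps) contents, i.e. their supremum over eps > 0. *)
Definition hausdorff2 {R : realType} {m : nat} (E : set 'rV[R]_m) : \bar R :=
  ereal_sup [set hcontent2 eps E | eps in [set eps : R | 0 < eps]].

Definition selfprod {R : realType} {n : nat} (X : set 'rV[R]_n)
  : set 'rV[R]_(n + n) :=
  [set row_mx x y | x in X & y in X].

(* Let V x be the total variation of g on [a, x].  Appending y to a partition
   of [a, x] gives |g y - g x| <= V y - V x for x <= y, so grouping the points
   x by the integer part of V x / c covers g([a, b]) by floor(l / c) + 1 sets
   of diameter <= c.  Their pairwise products cover the square of the curve by
   at most (l / c + 1)^2 sets of diameter <= sqrt 2 * c, of total content
   (pi / 4) * 2 c^2 * (l / c + 1)^2 = (pi / 2) * (l + c)^2; let c -> 0.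
   A periodic curve is the image of one period. *)

From HB Require Import structures.
From mathcomp Require Import all_boot all_order all_algebra.
From mathcomp Require Import all_classical all_reals all_analysis.
From mathcomp Require Import ring lra zify.
Import Order.TTheory GRing.Theory Num.Theory.
Import numFieldNormedType.Exports.
Import archimedean.Num.Def archimedean.Num.Theory.

Set Implicit Arguments.
Unset Strict Implicit.
Unset Printing Implicit Defensive.

Local Open Scope classical_set_scope.
Local Open Scope ring_scope.

Section Enorm.
Variable R : realType.

Lemma enorm_ge0 n (v : 'rV[R]_n) : 0 <= enorm v.
Proof. exact: sqrtr_ge0. Qed.

Lemma enorm0 n : enorm (0 : 'rV[R]_n) = 0.
Proof. by rewrite /enorm big1 ?sqrtr0 // => i _; rewrite mxE expr0n. Qed.

Lemma enorm_sqr n (v : 'rV[R]_n) : enorm v ^+ 2 = \sum_(i < n) v ord0 i ^+ 2.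
Proof. by rewrite sqr_sqrtr // sumr_ge0 // => i _; rewrite sqr_ge0. Qed.

Lemma enormB n (u v : 'rV[R]_n) : enorm (u - v) = enorm (v - u).
Proof.
by rewrite /enorm; congr Num.sqrt; apply: eq_bigr => i _; rewrite !mxE -sqrrN opprB.
Qed.

Lemma enorm_row_mx n m (u : 'rV[R]_n) (w : 'rV[R]_m) :
  enorm (row_mx u w) = Num.sqrt (enorm u ^+ 2 + enorm w ^+ 2).
Proof.
rewrite !enorm_sqr /enorm big_split_ord /=.
by congr (Num.sqrt (_ + _)); apply: eq_bigr => i _; rewrite ?row_mxEl ?row_mxEr.
Qed.

End Enorm.

Section TotalVariation.
Variables (R : realType) (n : nat) (g : R -> 'rV[R]_n).

Lemma vvariation_ge0 (a b : R) s : 0 <= vvariation a b g s.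
Proof. by apply: sumr_ge0 => k _; exact: enorm_ge0. Qed.

Lemma itv_partition_rcons (a b c : R) s :
  itv_partition a b s -> b < c -> itv_partition a c (rcons s c).
Proof.
by move=> abs bc; rewrite -cats1; apply: itv_partition_cat abs (itv_partition1 bc).
Qed.

Lemma vvariation_rcons (a b c : R) s : itv_partition a b s ->
  vvariation a c g (rcons s c) = vvariation a b g s + enorm (g c - g b).
Proof.
move=> abs; rewrite /vvariation size_rcons big_nat_recr //=; congr (_ + _).
  rewrite !big_nat; apply: eq_bigr => k /andP[_ ks] /=.
  rewrite -rcons_cons !nth_rcons /= ks ltnS (ltnW ks).
  by rewrite !(set_nth_default b c) //= ltnS ltnW.
rewrite -rcons_cons !nth_rcons /= ltnn eqxx ltnSn.
by rewrite (set_nth_default b) ?(itv_partition_nth_size _ abs).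
Qed.

Lemma vtotal_variation_ge0 (a b : R) : a <= b -> (0 <= vtotal_variation a b g)%E.
Proof.
move=> ab; have [s abs] : exists s, itv_partition a b s.
  move: ab; rewrite le_eqVlt => /predU1P[<-|ab]; first by exists [::].
  by exists [:: b]; exact: itv_partition1.
apply: le_trans (ereal_sup_ubound _); last by exists (vvariation a b g s) => //; exists s.
by rewrite lee_fin vvariation_ge0.
Qed.

Lemma vtotal_variation_chord (a b c : R) : b < c ->
  (vtotal_variation a b g + (enorm (g c - g b))%:E <= vtotal_variation a c g)%E.
Proof.
move=> bc; rewrite -leeBrDr //; apply: ub_ereal_sup => _ [_ [s abs <-] <-].
rewrite leeBrDr // -EFinD -vvariation_rcons //.
apply: ereal_sup_ubound; exists (vvariation a c g (rcons s c)) => //.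
by exists (rcons s c) => //; apply: itv_partition_rcons abs bc.
Qed.

Lemma le_vtotal_variation (a x y : R) : x <= y ->
  (vtotal_variation a x g <= vtotal_variation a y g)%E.
Proof.
rewrite le_eqVlt => /predU1P[-> //|xy].
apply: le_trans (vtotal_variation_chord a xy).
by rewrite leeDl // lee_fin enorm_ge0.
Qed.

Section FiniteVariation.
Variables (a b : R).
Hypothesis tv_fin : (vtotal_variation a b g < +oo)%E.

Local Notation V x := (fine (vtotal_variation a x g)).

Lemma vtotal_variation_fin_num x : a <= x <= b ->
  vtotal_variation a x g \is a fin_num.
Proof.
case/andP=> ax xb; rewrite ge0_fin_numE ?vtotal_variation_ge0 //.
exact: le_lt_trans (le_vtotal_variation a xb) tv_fin.
Qed.

Lemma fine_vtotal_variation_itv x : a <= x <= b -> 0 <= V x <= V b.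
Proof.
move=> axb; have /andP[ax xb] := axb.
have bfin : vtotal_variation a b g \is a fin_num.
  by apply: vtotal_variation_fin_num; rewrite lexx (le_trans ax xb).
rewrite fine_ge0 ?vtotal_variation_ge0 //=.
apply: fine_le => //; last exact: le_vtotal_variation.
exact: vtotal_variation_fin_num.
Qed.

Lemma enorm_le_fine_vtotal_variation x y : a <= x -> x <= y -> y <= b ->
  enorm (g y - g x) <= V y - V x.
Proof.
move=> ax; rewrite le_eqVlt => /predU1P[<- _|xy yb]; first by rewrite !subrr enorm0.
have xfin : vtotal_variation a x g \is a fin_num.
  by apply: vtotal_variation_fin_num; rewrite ax (le_trans (ltW xy) yb).
have yfin : vtotal_variation a y g \is a fin_num.
  by apply: vtotal_variation_fin_num; rewrite yb (le_trans ax (ltW xy)).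
by rewrite lerBrDl -lee_fin EFinD !fineK // vtotal_variation_chord.
Qed.

End FiniteVariation.

End TotalVariation.

Definition coverable {R : realType} {n : nat} (X : set 'rV[R]_n) (M : nat) (c : R) :=
  exists P : nat -> set 'rV[R]_n,
    (forall y, X y -> exists2 G, (G < M)%N & P G y) /\
    (forall G y z, P G y -> P G z -> enorm (y - z) <= c).

Lemma coverable_image (R : realType) n (A : set R) (g : R -> 'rV[R]_n)
    (phi : R -> R) (l c : R) : 0 <= l -> 0 < c ->
  (forall x, A x -> 0 <= phi x <= l) ->
  (forall x y, A x -> A y -> x <= y -> enorm (g y - g x) <= phi y - phi x) ->
  exists2 M : nat, M%:R * c <= l + c & coverable (g @` A) M c.
Proof.
move=> l0 c0 phi_itv phi_ctrl.
have phic_ge0 x : A x -> 0 <= phi x / c.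
  by move=> Ax; have /andP[phi0 _] := phi_itv x Ax; rewrite divr_ge0 // ltW.
exists (truncn (l / c)).+1.
  have /andP[+ _] := truncn_itv (divr_ge0 l0 (ltW c0)).
  by rewrite -ler_pdivlMr // mulrDl divff ?gt_eqF // -natr1 lerD2r.
pose level x := truncn (phi x / c).
exists (fun G => g @` [set x | A x /\ level x = G]); split.
  move=> _ [x Ax <-]; exists (level x); last by exists x.
  rewrite ltnS le_truncn // ler_pM2r ?invr_gt0 //.
  by have /andP[] := phi_itv x Ax.
have close x y : A x -> A y -> level x = level y -> x <= y -> enorm (g y - g x) <= c.
  move=> Ax Ay lxy xy; apply: le_trans (phi_ctrl x y Ax Ay xy) _.
  have /andP[lx _] := truncn_itv (phic_ge0 x Ax).
  have /andP[_ ly] := truncn_itv (phic_ge0 y Ay).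
  rewrite -/(level x) in lx; rewrite -/(level y) -lxy -natr1 in ly.
  have : phi y / c - phi x / c < 1 by lra.
  by rewrite -mulrBl ltr_pdivrMr // mul1r => /ltW.
move=> G _ _ [x [Ax <-] <-] [y [Ay lyG] <-].
have [xy|/ltW yx] := leP x y; first by rewrite enormB; apply: close.
exact: close.
Qed.

Section Diameter.
Variable R : realType.

Lemma ediam_ge0 m (A : set 'rV[R]_m) : (0 <= ediam A)%E.
Proof. by apply: ereal_sup_ubound; left. Qed.

Lemma ediam_le m (A : set 'rV[R]_m) (B : R) : 0 <= B ->
  (forall x y, A x -> A y -> enorm (x - y) <= B) -> (ediam A <= B%:E)%E.
Proof.
move=> B0 AB; apply: ub_ereal_sup => _ [->|[x [y [Ax [Ay ->]]]]]; rewrite lee_fin //.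
exact: AB.
Qed.

Lemma ediam_row_mx_le m (P Q : set 'rV[R]_m) (D : R) : 0 <= D ->
  (forall y z, P y -> P z -> enorm (y - z) <= D) ->
  (forall y z, Q y -> Q z -> enorm (y - z) <= D) ->
  (ediam [set row_mx y z | y in P & z in Q] <= (Num.sqrt 2 * D)%:E)%E.
Proof.
move=> D0 PD QD; apply: ediam_le => [|_ _ [y1 Py1 [z1 Qz1 <-]] [y2 Py2 [z2 Qz2 <-]]].
  by rewrite mulr_ge0 ?sqrtr_ge0.
rewrite opp_row_mx add_row_mx enorm_row_mx -[D]ger0_norm // -sqrtr_sqr -sqrtrM //.
rewrite ler_sqrt ?mulr_ge0 ?sqr_ge0 // mulr_natl mulr2n lerD //.
  by rewrite ler_pXn2r ?nnegrE ?enorm_ge0 ?PD.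
by rewrite ler_pXn2r ?nnegrE ?enorm_ge0 ?QD.
Qed.

End Diameter.

Lemma nneseries_le_bounded_support (R : realType) (f : nat -> \bar R) (N : nat) (B : R) :
  (forall j, (0 <= f j)%E) -> (forall j, (j < N)%N -> (f j <= B%:E)%E) ->
  (forall j, (N <= j)%N -> f j = 0%E) ->
  (\sum_(0 <= j <oo) f j <= (N%:R * B)%:E)%E.
Proof.
move=> f0 fB fN; rewrite (nneseries_split 0 N) // add0n eseries0 ?adde0; last first.
  by move=> j /fN.
apply: (@le_trans _ _ (\sum_(0 <= j < N) B%:E)%E).
  by rewrite !big_nat; apply: lee_sum => j /andP[_ /fB].
by rewrite sumEFin sumr_const_nat subn0 mulr_natl.
Qed.

Lemma hcontent2_selfprod_le (R : realType) n (X : set 'rV[R]_n) (M : nat) (c eps : R) :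
  0 <= c -> Num.sqrt 2 * c < eps -> coverable X M c ->
  (hcontent2 eps (selfprod X) <= ((pi / 2) * (M%:R * c) ^+ 2)%:E)%E.
Proof.
move=> c0 c_eps [P [Pcover Pdiam]].
(* The product P G1 x P G2 is the set of index G1 * M + G2. *)
pose Q j := if (j < M * M)%N
  then [set row_mx y z | y in P (j %/ M)%N & z in P (j %% M)%N] else set0.
have Qdiam j : (ediam (Q j) <= (Num.sqrt 2 * c)%:E)%E.
  rewrite /Q; case: ifP => _; first exact: ediam_row_mx_le c0 (Pdiam _) (Pdiam _).
  by apply: ediam_le => [|? ? []]; rewrite mulr_ge0 ?sqrtr_ge0.
have Q0 j : (M * M <= j)%N -> ediam (Q j) = 0%E.
  move=> jMM; apply/eqP; rewrite eq_le ediam_ge0 andbT.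
  by rewrite /Q ltnNge jMM /=; apply: ediam_le => // ? ? [].
have Qcover : selfprod X `<=` \bigcup_j Q j.
  move=> _ [y Xy [z Xz <-]].
  have [G1 G1M PG1] := Pcover y Xy; have [G2 G2M PG2] := Pcover z Xz.
  exists (G1 * M + G2)%N => //; rewrite /Q ifT; last by nia.
  rewrite divnMDl ?modnMDl ?divn_small ?modn_small ?addn0 //; last by lia.
  by exists y => //; exists z.
apply: le_trans (ereal_inf_lbound _) _.
  by exists Q; split => [j|]; [exact: le_lt_trans (Qdiam j) _|split].
have sqr2c : (Num.sqrt 2 * c) ^+ 2 = 2 * c ^+ 2.
  by rewrite exprMn sqr_sqrtr.
rewrite -(_ : pi / 4 * ((M * M)%:R * (Num.sqrt 2 * c) ^+ 2) = pi / 2 * (M%:R * c) ^+ 2);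
  last by rewrite sqr2c natrM; field.
have Qsum : (\sum_(0 <= j <oo) (ediam (Q j) * ediam (Q j))
    <= ((M * M)%:R * (Num.sqrt 2 * c) ^+ 2)%:E)%E.
  apply: nneseries_le_bounded_support => [j|j _|j /Q0 ->]; last by rewrite mule0.
    exact: mule_ge0 (ediam_ge0 _) (ediam_ge0 _).
  by rewrite expr2 EFinM; apply: lee_pmul (ediam_ge0 _) (ediam_ge0 _) (Qdiam j) (Qdiam j).
by rewrite EFinM; apply: lee_wpmul2l Qsum; rewrite lee_fin divr_ge0 ?pi_ge0.
Qed.

Lemma hausdorff2_selfprod_le (R : realType) n (X : set 'rV[R]_n) (l : R) : 0 <= l ->
  (forall c, 0 < c -> exists2 M : nat, M%:R * c <= l + c & coverable X M c) ->
  (hausdorff2 (selfprod X) <= ((pi / 2) * l ^+ 2)%:E)%E.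
Proof.
move=> l0 Xcov; apply: ub_ereal_sup => _ [eps /= eps0 <-].
apply/lee_addgt0Pr => e e0.
have pi0 : 0 < pi :> R := pi_gt0 R.
pose c := Num.min (eps / 2) (Num.min 1 (e / (pi * (2 * l + 1)))).
have c0 : 0 < c by rewrite !lt_min !divr_gt0 ?mulr_gt0 ?ltr01 //; lra.
have c_eps : c <= eps / 2 by rewrite ge_min lexx.
have c1 : c <= 1 by rewrite !ge_min lexx orbT.
have c_e : c * (pi * (2 * l + 1)) <= e.
  by rewrite -ler_pdivlMr ?mulr_gt0 //; [rewrite !ge_min lexx !orbT | lra].
have [M Mc Xc] := Xcov c c0.
have sqrt2_lt2 : Num.sqrt 2 < 2 :> R.
  have := sqr_sqrtr (ler0n R 2); have := sqrtr_ge0 (2 : R); nra.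
apply: le_trans (hcontent2_selfprod_le (ltW c0) _ Xc) _; first by nra.
rewrite -EFinD lee_fin.
have Mc0 : 0 <= M%:R * c by rewrite mulr_ge0 // ltW.
have Mc_sqr : (M%:R * c) ^+ 2 <= l ^+ 2 + c * (2 * l + 1).
  apply: (@le_trans _ _ ((l + c) ^+ 2)); first by rewrite lerXn2r ?nnegrE //; lra.
  nra.
apply: le_trans (_ : pi / 2 * (l ^+ 2 + c * (2 * l + 1)) <= _).
  by rewrite ler_pM2l ?divr_gt0.
rewrite mulrDr lerD2l; nra.
Qed.

Lemma hausdorff2_selfprod_curve_le (R : realType) n (a b : R) (g : R -> 'rV[R]_n) :
  a <= b -> (vtotal_variation a b g < +oo)%E ->
  (hausdorff2 (selfprod (g @` `[a, b])) <=
    ((pi / 2) * fine (vtotal_variation a b g) ^+ 2)%:E)%E.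
Proof.
move=> ab tv; have abb : a <= b <= b by rewrite ab lexx.
have /andP[l0 _] := fine_vtotal_variation_itv tv abb.
apply: (hausdorff2_selfprod_le l0) => c c0.
apply: (coverable_image l0 c0) => [x|x y]; rewrite /= !in_itv /=.
  exact: fine_vtotal_variation_itv.
by move=> /andP[ax _] /andP[_ yb] xy; apply: (enorm_le_fine_vtotal_variation tv).
Qed.

Lemma range_periodic (R : realType) n (T : R) (g : R -> 'rV[R]_n) :
  0 < T -> (forall t, g (t + T) = g t) -> range g = g @` `[0, T].
Proof.
move=> T0 gT.
have gTn (m : nat) x : g (x + m%:R * T) = g x.
  elim: m x => [|m IH] x; first by rewrite mul0r addr0.
  by rewrite -natr1 mulrDl mul1r addrA gT IH.
have gTz (z : int) x : g (x + z%:~R * T) = g x.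
  case: z => m; first exact: gTn.
  by rewrite NegzE mulrNz mulNr -(gTn m.+1 (x - _)) subrK.
apply/seteqP; split => [_ [t _ <-]|_ [t _ <-]]; last by exists t.
have /andP[tT_ge tT_lt] := real_floor_itv (num_real (t / T)).
exists (t - (floor (t / T))%:~R * T); last by rewrite -(gTz (floor (t / T))) subrK.
rewrite /= in_itv /= subr_ge0 -ler_pdivlMr // tT_ge /= lerBlDl.
by rewrite -[X in _ + X]mul1r -mulrDl -ler_pdivrMr // -intrD1 ltW.
Qed.

Theorem lemma5p1 (R : realType) (n : nat) :
  (* J = [a,b] a closed interval *)
  (forall (a b : R) (g : R -> 'rV[R]_n),
     a <= b ->
     {within `[a, b], continuous g} ->
     (vtotal_variation a b g < +oo)%E ->
     (hausdorff2 (selfprod (g @` `[a, b])) <=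
        ((pi / 2) * fine (vtotal_variation a b g) ^+ 2)%:E)%E /\
     (hausdorff2 (selfprod (g @` `[a, b])) < +oo)%E) /\
  (* J = a circle R/(TZ), i.e. g is T-periodic on R *)
  (forall (T : R) (g : R -> 'rV[R]_n),
     0 < T ->
     (forall t, g (t + T) = g t) ->
     continuous g ->
     (vtotal_variation 0 T g < +oo)%E ->
     (hausdorff2 (selfprod (range g)) <=
        ((pi / 2) * fine (vtotal_variation 0 T g) ^+ 2)%:E)%E /\
     (hausdorff2 (selfprod (range g)) < +oo)%E).
Proof.
split=> [a b g ab _ tv | T g T0 gT _ tv].
  have bound := hausdorff2_selfprod_curve_le ab tv.
  by split=> //; exact: le_lt_trans bound (ltry _).
have bound := hausdorff2_selfprod_curve_le (ltW T0) tv.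
by rewrite (range_periodic T0 gT); split=> //; exact: le_lt_trans bound (ltry _).
Qed.
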